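(* Let $(X,d,\mu)$ be unbounded with base point $a$, assume $X$ is uniformly perfect at $a$ for radii $\ge1$ with constant $\kappa$, and assume that $\mu$ is doubling on $X$ and that $\hat\mu_q$, for some $q>0$, is doubling on $(\widehat X,\hat d)$. Then there are $0<s<q$ and $C_s>0$ such that $$\frac{\mu(B(a,r))}{\mu(B(a,R))}\ge C_s\Bigl(\frac rR\Bigr)^s\quad\text{whenever }1\le r\le R<\infty.$$
   Context: $\mu$ is a positive complete Borel measure on $(X,d)$ with $0<\mu(B)<\infty$ for every (open) ball $B(x,r)=\{y:d(x,y)<r\}$. A measure $\nu$ on a metric space is doubling if there is $C$ with $0<\nu(B(x,2r))\le C\nu(B(x,r))<\infty$ for all balls. $X$ is uniformly perfect at $a$ for radii $\ge1$ with constant $\kappa>1$ if $B(a,\kappa r)\setminus B(a,r)\ne\emptyset$ for all $r\ge1$. Sphericalization: $|x|=d(x,a)$, $\widehat X=X\cup\{\infty\}$, $d_a(x,y)=\frac{d(x,y)}{(1+|x|)(1+|y|)}$ for $x,y\in X$, $d_a(x,\infty)=d_a(\infty,x)=\frac1{1+|x|}$, $d_a(\infty,\infty)=0$; $\hat d(x,y)=\inf\sum_{j=1}^k d_a(x_{j-1},x_j)$ over finite chains $x=x_0,\dots,x_k=y$ in $\widehat X$. The measure $\hat\mu_q$ on $\widehat X$ is $d\hat\mu_q(x)=\frac{d\mu(x)}{(1+|x|)^q}$ on $X$ with $\hat\mu_q(\{\infty\})=0$. *)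

From HB Require Import structures.
From mathcomp Require Import all_boot all_order all_algebra.
From mathcomp Require Import all_classical all_reals all_analysis.
Set Implicit Arguments. Unset Strict Implicit. Unset Printing Implicit Defensive.
Import Order.TTheory GRing.Theory Num.Theory.
Local Open Scope classical_set_scope.
Local Open Scope ring_scope.

Section Defs.
Context {R : realType} {X : Type}.

Definition is_metric (d : X -> X -> R) : Prop :=
  (forall x y, 0 <= d x y) /\ (forall x y, d x y = 0 <-> x = y) /\
  (forall x y, d x y = d y x) /\ (forall x y z, d x z <= d x y + d y z).

Definition dball (d : X -> X -> R) (x : X) (r : R) : set X := [set y | d x y < r].

Definition dopen (d : X -> X -> R) (A : set X) : Prop :=
  forall x, A x -> exists2 e : R, 0 < e & dball d x e `<=` A.

Definition unbounded_at (d : X -> X -> R) (a : X) : Prop :=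
  forall M : R, exists x, M < d a x.

Definition unif_perfect_at (d : X -> X -> R) (a : X) (kappa : R) : Prop :=
  1 < kappa /\
  forall r : R, 1 <= r -> (dball d a (kappa * r) `\` dball d a r) !=set0.

(* sphericalized distance d_a on Xhat = option X (None = infinity) *)
Definition d_sph (d : X -> X -> R) (a : X) (x y : option X) : R :=
  match x, y with
  | Some x, Some y => d x y / ((1 + d a x) * (1 + d a y))
  | Some x, None => 1 / (1 + d a x)
  | None, Some y => 1 / (1 + d a y)
  | None, None => 0
  end.

Fixpoint chain_len (d : X -> X -> R) (a : X) (x : option X)
    (l : seq (option X)) (y : option X) : R :=
  match l with
  | [::] => d_sph d a x y
  | z :: l' => d_sph d a x z + chain_len d a z l' y
  end.

Definition dhat (d : X -> X -> R) (a : X) (x y : option X) : R :=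
  inf (range (fun l => chain_len d a x l y)).

Definition dhat_ball (d : X -> X -> R) (a : X) (x : option X) (r : R)
  : set (option X) := [set y | dhat d a x y < r].

End Defs.

Section Meas.
Context {R : realType} {dsp : measure_display} {X : measurableType dsp}.
Local Open Scope ereal_scope.

Definition doubling (d : X -> X -> R) (mu : set X -> \bar R) : Prop :=
  exists C : R, forall (x : X) (r : R), (0 < r)%R ->
    0 < mu (dball d x (2 * r)) /\
    mu (dball d x (2 * r)) <= C%:E * mu (dball d x r) /\
    mu (dball d x r) < +oo.

Definition muhat (d : X -> X -> R) (a : X) (mu : {measure set X -> \bar R})
    (q : R) (A : set (option X)) : \bar R :=
  \int[mu]_(x in [set x | A (Some x)]) ((1 + d a x) `^ (- q))%:E.

Definition doubling_hat (d : X -> X -> R) (a : X)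
    (mu : {measure set X -> \bar R}) (q : R) : Prop :=
  exists C : R, forall (x : option X) (r : R), (0 < r)%R ->
    0 < muhat d a mu q (dhat_ball d a x (2 * r)) /\
    muhat d a mu q (dhat_ball d a x (2 * r))
      <= C%:E * muhat d a mu q (dhat_ball d a x r) /\
    muhat d a mu q (dhat_ball d a x r) < +oo.

End Meas.

From HB Require Import structures.
From mathcomp Require Import all_boot all_order all_algebra.
From mathcomp Require Import all_classical all_reals all_analysis.
From mathcomp Require Import ring lra measurable_realfun.
Import Order.TTheory GRing.Theory Num.Theory.
Local Open Scope classical_set_scope.
Local Open Scope ring_scope.

(* Write |x| = d a x and T t = \hat\mu_q {|x| > t} ([tail_mass]).  Since
   1/(1 + |x|) = d_a(x, oo) is 1-Lipschitz for \hat d, the tail {|y| > |z|} lies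
   in a \hat d-ball around z of radius 4 rho, rho = 1/(2(1 + |z|)), while the ball
   of radius rho lies in the annulus t < |y| < 2|z| + 1 as soon as 2t <= |z|.
   Uniform perfectness supplies such z with |z| < 2 kappa t, so doubling \hat\mu_q
   twice gives T((4 kappa + 1) t) <= C^2/(1 + C^2) T t, i.e. T decays like a power
   t^-beta, and also T t <~ t^-q mu(B(a, t)).  Conversely the ball B(z, t) lies in
   the tail, whence t^-q mu(B(a, t)) <~ T t by doubling of mu.  Chaining these
   estimates between r and R gives the claim with s = q - beta. *)

Section Sphericalization.
Context {R : realType} {X : Type} (d : X -> X -> R) (a : X).
Hypothesis dm : is_metric d.

Lemma one_plus_dist_gt0 x : 0 < 1 + d a x.
Proof. by have := dm.1 a x; lra. Qed.

Lemma dist_base_lipschitz x y : `|d a x - d a y| <= d x y.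
Proof.
have [_ [_ [dC dtr]]] := dm.
have := dtr a y x; have := dtr a x y; rewrite (dC y x) => h1 h2.
by rewrite ler_norml; apply/andP; split; lra.
Qed.

Lemma d_sph_infty_lipschitz x y :
  `|d_sph d a x None - d_sph d a y None| <= d_sph d a x y.
Proof.
case: x => [x|]; case: y => [y|] /=.
- have hx := one_plus_dist_gt0 x; have hy := one_plus_dist_gt0 y.
  have -> : 1 / (1 + d a x) - 1 / (1 + d a y) =
            (d a y - d a x) / ((1 + d a x) * (1 + d a y)).
    by field; rewrite !gt_eqF.
  rewrite normrM [X in _ * X]ger0_norm; last by rewrite invr_ge0 mulr_ge0 // ltW.
  apply: ler_wpM2r; first by rewrite invr_ge0 mulr_ge0 // ltW.
  by rewrite distrC dist_base_lipschitz.
- by rewrite subr0 ger0_norm // divr_ge0 // ltW // one_plus_dist_gt0.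
- by rewrite sub0r normrN ger0_norm // divr_ge0 // ltW // one_plus_dist_gt0.
- by rewrite subrr normr0.
Qed.

Lemma chain_len_infty_lipschitz l x y :
  `|d_sph d a x None - d_sph d a y None| <= chain_len d a x l y.
Proof.
elim: l x => [|z l IH] x /=; first exact: d_sph_infty_lipschitz.
have := d_sph_infty_lipschitz x z; have := IH z.
have := ler_normD (d_sph d a x None - d_sph d a z None)
                  (d_sph d a z None - d_sph d a y None).
rewrite addrA subrK; lra.
Qed.

Lemma dhat_infty_lipschitz x y :
  `|d_sph d a x None - d_sph d a y None| <= dhat d a x y.
Proof.
apply: lb_le_inf; first by exists (chain_len d a x [::] y), [::].
by move=> _ [l _ <-]; exact: chain_len_infty_lipschitz.
Qed.

Lemma dhat_le_d_sph x y : dhat d a x y <= d_sph d a x y.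
Proof.
apply: ge_inf; last by exists [::].
exists 0 => _ [l _ <-].
exact: le_trans (normr_ge0 _) (chain_len_infty_lipschitz l x y).
Qed.

Lemma dhat_infty_lt2 y : dhat d a None (Some y) < 2.
Proof.
apply: le_lt_trans (dhat_le_d_sph _ _) _ => /=.
by have := dm.1 a y; rewrite ltr_pdivrMr ?one_plus_dist_gt0 //; lra.
Qed.

Lemma dhat_lt_of_dist_lt z y : d a z < d a y ->
  dhat d a (Some z) (Some y) < 2 / (1 + d a z).
Proof.
move=> zy; have [_ [_ [dC dtr]]] := dm.
apply: le_lt_trans (dhat_le_d_sph _ _) _ => /=.
have hz := one_plus_dist_gt0 z; have hy := one_plus_dist_gt0 y.
rewrite ltr_pdivrMr ?mulr_gt0 //.
have -> : 2 / (1 + d a z) * ((1 + d a z) * (1 + d a y)) = 2 * (1 + d a y).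
  by field; rewrite gt_eqF.
by have := dtr z a y; rewrite (dC z a); lra.
Qed.

Lemma dhat_near_in_annulus z y t : 1 <= t -> 2 * t <= d a z ->
  dhat d a (Some z) (Some y) < (1 + d a z)^-1 / 2 ->
  t < d a y < 2 * d a z + 1.
Proof.
move=> t1 tz near.
have hz := one_plus_dist_gt0 z; have hy := one_plus_dist_gt0 y.
have := le_lt_trans (dhat_infty_lipschitz (Some z) (Some y)) near => /=.
have -> : 1 / (1 + d a z) - 1 / (1 + d a y) =
          (d a y - d a z) / ((1 + d a z) * (1 + d a y)).
  by field; rewrite !gt_eqF.
rewrite normrM [X in _ * X]ger0_norm; last by rewrite invr_ge0 mulr_ge0 // ltW.
rewrite ltr_pdivrMr ?mulr_gt0 //.
have -> : (1 + d a z)^-1 / 2 * ((1 + d a z) * (1 + d a y)) = (1 + d a y) / 2.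
  by field; rewrite gt_eqF.
by rewrite ltr_norml => /andP[h1 h2]; apply/andP; split; lra.
Qed.

Lemma dopen_dball x r : dopen d (dball d x r).
Proof.
have [_ [_ [_ dtr]]] := dm.
move=> y; rewrite /dball /= => hy; exists (r - d x y); first lra.
by move=> w; rewrite /dball /= => hw; have := dtr x y w; lra.
Qed.

Lemma dopen_dist_gt t : dopen d [set y | t < d a y].
Proof.
have [_ [_ [dC dtr]]] := dm.
move=> y /= hy; exists (d a y - t); first lra.
by move=> w; rewrite /dball /= => hw; have := dtr a w y; rewrite (dC w y); lra.
Qed.

End Sphericalization.

(* Unlike ge0_subset_integral, no measurability is required: the \hat d-balls
   used below are not known to be measurable. *)
Lemma ge0_le_integral_sub d (T : measurableType d) (R : realType)
    (mu : {measure set T -> \bar R}) (D E : set T) (f g : T -> \bar R) :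
  (forall x, (0 <= f x)%E) -> (forall x, (0 <= g x)%E) ->
  (forall x, D x -> E x /\ (f x <= g x)%E) ->
  (\int[mu]_(x in D) f x <= \int[mu]_(x in E) g x)%E.
Proof.
move=> f0 g0 fg; rewrite !ge0_integralE //=.
apply: ge_ereal_sup => _ [h /= hf <-]; apply: ereal_sup_ubound; exists h => //= x.
have := hf x; rewrite /patch; case: ifPn => [/[!inE] Dx|_].
  by have [Ex fgx] := fg x Dx; rewrite mem_set // => /le_trans; apply.
by move=> hx; case: ifPn => _ //; exact: le_trans hx (g0 x).
Qed.

Lemma ler_powRN {R : realType} (x y q : R) : 0 < x -> x <= y -> 0 <= q ->
  y `^ (- q) <= x `^ (- q).
Proof.
move=> x0 xy q0; rewrite !powRN lef_pV2 ?posrE ?powR_gt0 //; last lra.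
by apply: ge0_ler_powR => //; rewrite nnegrE; lra.
Qed.

Lemma exists_expr_ge {R : archiRealFieldType} (L x : R) : 1 < L -> exists k : nat, x <= L ^+ k.
Proof.
move=> L1; have L10 : 0 < L - 1 by lra.
have bernoulli k : 1 + k%:R * (L - 1) <= L ^+ k.
  elim: k => [|k IH]; first by rewrite mul0r addr0 expr0.
  have k0 : 0 <= k%:R :> R := ler0n _ k.
  have := ler_wpM2l (ltW (lt_trans ltr01 L1)) IH.
  have := mulr_ge0 (mulr_ge0 k0 (ltW L10)) (ltW L10).
  by rewrite exprS -natr1; nra.
have := archi_boundP (divr_ge0 (normr_ge0 x) (ltW L10)).
set k := Num.Def.archi_bound _ => hk; exists k.
rewrite ltr_pdivrMr // in hk.
by have := bernoulli k; have := ler_norm x; lra.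
Qed.

Lemma exists_powR_le {R : realType} (L y b : R) : 1 < L -> 1 < y -> 0 < b ->
  exists2 beta, 0 < beta <= b & L `^ beta <= y.
Proof.
move=> L1 y1 b0; have lnL : 0 < ln L by exact: ln_gt0.
set b0' := ln y / ln L; exists (Num.min b b0').
  by rewrite lt_min b0 divr_gt0 ?ln_gt0 // ge_min lexx.
have minb0' : Num.min b b0' <= b0' by rewrite ge_min lexx orbT.
apply: le_trans (ler_powR (ltW L1) minb0') _.
by rewrite /powR gt_eqF ?(lt_trans ltr01) // divfK ?gt_eqF // lnK // posrE (lt_trans ltr01).
Qed.

Section GeometricDecay.
Context {R : realType} (T : R -> R) (L beta : R).
Hypotheses (L_gt1 : 1 < L) (beta_ge0 : 0 <= beta).
Hypothesis T_ge0 : forall u, 1 <= u -> 0 <= T u.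
Hypothesis T_nonincr : forall u v, 1 <= u -> u <= v -> T v <= T u.
Hypothesis T_decay : forall t, 1 <= t -> L `^ beta * T (L * t) <= T t.

Lemma geometric_decay_base r R' : 1 <= r -> r <= R' -> R' <= L * r ->
  T R' <= L `^ beta * ((r / R') `^ beta * T r).
Proof.
move=> r1 rR RL; have R0 : 0 < R' by lra.
have L0 : 0 <= L by have := L_gt1; lra.
have rR0 : 0 <= r / R' by rewrite divr_ge0 //; lra.
rewrite mulrA -powRM //.
have : 1 <= (L * (r / R')) `^ beta.
  by rewrite -(powRr0 (L * (r / R'))) ler_powR // mulrA ler_pdivlMr // mul1r.
by have := T_nonincr _ _ r1 rR; have := T_ge0 _ r1; have := beta_ge0; nra.
Qed.

Lemma geometric_decay_iter k r R' : 1 <= r -> r <= R' -> R' <= L ^+ k * r ->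
  T R' <= L `^ beta * ((r / R') `^ beta * T r).
Proof.
move=> r1; elim: k R' => [|k IH] R' rR RLk.
  by apply: geometric_decay_base => //; rewrite expr0 mul1r in RLk; have := L_gt1; nra.
have [RL|LR] := leP R' (L * r); first exact: geometric_decay_base.
have L1 := L_gt1; have L0 : 0 < L by lra.
set R0 := R' / L; have R'E : R' = L * R0 by rewrite /R0 mulrC divfK ?gt_eqF.
have rR0 : r <= R0 by rewrite /R0 ler_pdivlMr // mulrC; lra.
have R0k : R0 <= L ^+ k * r by rewrite /R0 ler_pdivrMr // mulrAC -exprSr.
have Lb : 0 < L `^ beta by rewrite powR_gt0.
have ratioE : (r / R0) `^ beta = L `^ beta * (r / R') `^ beta.
  rewrite -powRM ?divr_ge0; try lra; congr (_ `^ _).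
  by rewrite R'E; field; rewrite !gt_eqF //; lra.
have := T_decay _ (le_trans r1 rR0); rewrite -R'E => decay.
have := IH R0 rR0 R0k; rewrite ratioE => ih.
rewrite -(ler_pM2l Lb); apply: le_trans decay _; apply: le_trans ih _.
by rewrite !mulrA.
Qed.

Lemma geometric_decay r R' : 1 <= r -> r <= R' ->
  T R' <= L `^ beta * ((r / R') `^ beta * T r).
Proof.
move=> r1 rR; have [k Lk] := exists_expr_ge L (R' / r) L_gt1.
apply: (geometric_decay_iter k) => //.
by rewrite -ler_pdivrMr //; lra.
Qed.

End GeometricDecay.

Lemma ratio_ge_of_powR_bounds {R : realType} (q beta c1 c2 K r R' mr mR : R) :
  0 < r -> 0 < R' -> 0 < c2 -> 0 < K -> 0 < mR ->
  c1 * R' `^ (- q) * mR <= K * ((r / R') `^ beta * (c2 * r `^ (- q) * mr)) ->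
  c1 / (c2 * K) * (r / R') `^ (q - beta) <= mr / mR.
Proof.
move=> r0 R0 c20 K0 mR0; set x := r / R'; have x0 : 0 < x by rewrite divr_gt0.
have rE : r `^ (- q) = x `^ (- q) * R' `^ (- q).
  by rewrite -powRM ?divfK ?gt_eqF //; [lra|rewrite ltW].
have xE : x `^ beta * x `^ (- q) * x `^ (q - beta) = 1.
  have xn0 : x != 0 by rewrite gt_eqF.
  rewrite -!powRD ?xn0 ?implybT //.
  have -> : beta - q + (q - beta) = 0 by ring.
  exact: powRr0.
have PR : 0 < R' `^ (- q) by rewrite powR_gt0.
rewrite rE => h.
have {}h : c1 * mR <= K * c2 * (x `^ beta * x `^ (- q)) * mr.
  rewrite -(ler_pM2r PR); apply: le_trans (le_trans _ h) _;
  by rewrite le_eqVlt; apply/orP; left; apply/eqP; ring.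
have := ler_wpM2r (powR_ge0 x (q - beta)) h.
have -> : K * c2 * (x `^ beta * x `^ (- q)) * mr * x `^ (q - beta) =
          mr * (c2 * K) * (x `^ beta * x `^ (- q) * x `^ (q - beta)) by ring.
rewrite xE mulr1 => {}h.
rewrite ler_pdivlMr //.
have -> : c1 / (c2 * K) * x `^ (q - beta) * mR = c1 * mR * x `^ (q - beta) / (c2 * K).
  by field; rewrite !gt_eqF.
by rewrite ler_pdivrMr ?mulr_gt0.
Qed.

Section TailMass.
Context {R : realType} {dsp : measure_display} {X : measurableType dsp}.
Variables (d : X -> X -> R) (mu : {measure set X -> \bar R}) (a : X) (q : R).

Definition wmass (S : set X) : \bar R :=
  (\int[mu]_(x in S) ((1 + d a x) `^ (- q))%:E)%E.

Definition wmassR (S : set X) : R := fine (wmass S).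

Definition tail_mass (t : R) : R := wmassR [set y | t < d a y].

Definition ball_mass (x : X) (r : R) : R := fine (mu (dball d x r)).

Hypothesis balls_pos : forall (x : X) (r : R), 0 < r ->
  (0 < mu (dball d x r))%E /\ (mu (dball d x r) < +oo)%E.

Lemma dball_fin_num x r : 0 < r -> mu (dball d x r) \is a fin_num.
Proof. by move=> r0; rewrite ge0_fin_numE ?measure_ge0 // (balls_pos x r r0).2. Qed.

Lemma ball_mass_gt0 x r : 0 < r -> 0 < ball_mass x r.
Proof.
move=> r0; have [] := balls_pos x r r0.
by rewrite /ball_mass; case: (mu _) => //= s; rewrite !lte_fin.
Qed.

Lemma doubling_ball_mass : doubling d mu ->
  exists2 D, 0 < D & forall x r, 0 < r -> ball_mass x (2 * r) <= D * ball_mass x r.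
Proof.
move=> [D dbl]; exists (Num.max D 1) => [|x r r0]; first by rewrite lt_max ltr01 orbT.
have [_ [le2 _]] := dbl x r r0; have r2 : 0 < 2 * r by lra.
have fD : D%:E \is a fin_num by [].
have := fine_le (dball_fin_num _ _ r2) (fin_numM fD (dball_fin_num _ _ r0)) le2.
rewrite fineM ?(dball_fin_num _ _ r0) //= => le2'.
apply: le_trans le2' _; apply: ler_wpM2r; first exact/ltW/ball_mass_gt0.
by rewrite le_max lexx.
Qed.

Lemma doubling_hat_fin : doubling_hat d a mu q ->
  (wmass [set y | (dhat d a None (Some y) < 2)%R] < +oo)%E.
Proof. by move=> [C dbl]; have [_ [_ fin]] := dbl None 2 ltac:(lra). Qed.

Hypotheses (dm : is_metric d) (borel : forall A : set X, dopen d A -> measurable A).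
Hypothesis wmass_fin : (wmass [set y | (dhat d a None (Some y) < 2)%R] < +oo)%E.

Lemma measurable_weight : measurable_fun setT (fun x => ((1 + d a x) `^ (- q))%:E).
Proof.
apply/measurable_EFinP.
rewrite (_ : (fun x => _) = (@powR R ^~ (- q)) \o (cst 1 \+ d a)) //.
apply: measurableT_comp; first exact: measurable_powR.
apply: measurable_funD; first exact: measurable_cst.
apply: (measurability _ (measurable_realfun.RGenInftyO.measurableE R)).
move=> _ [_ [x ->] <-]; rewrite setTI.
have -> : d a @^-1` `]-oo, x[ = dball d a x.
  by apply/seteqP; split => y /=; rewrite in_itv.
exact/borel/dopen_dball.
Qed.

Lemma wmass_ge0 S : (0 <= wmass S)%E.
Proof. by apply: integral_ge0 => x _; rewrite lee_fin powR_ge0. Qed.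

(* All of X lies in the \hat d-ball of radius 2 around infinity. *)
Lemma wmass_fin_num S : wmass S \is a fin_num.
Proof.
rewrite ge0_fin_numE ?wmass_ge0 //; apply: le_lt_trans wmass_fin.
apply: ge0_le_integral_sub => [x|x|x _]; rewrite ?lee_fin ?powR_ge0 //.
by split => //; exact: dhat_infty_lt2.
Qed.

Lemma wmassR_ge0 S : 0 <= wmassR S.
Proof. exact/fine_ge0/wmass_ge0. Qed.

Lemma le_wmassR S S' : S `<=` S' -> wmassR S <= wmassR S'.
Proof.
move=> SS'; apply: fine_le; rewrite ?wmass_fin_num //.
by apply: ge0_le_integral_sub => [x|x|x /SS']; rewrite ?lee_fin ?powR_ge0.
Qed.

Lemma wmassR_le_ball_mass S x r c : 0 < r -> 0 <= c ->
  (forall y, S y -> dball d x r y /\ (1 + d a y) `^ (- q) <= c) ->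
  wmassR S <= c * ball_mass x r.
Proof.
move=> r0 c0 Sc; have mB : measurable (dball d x r) by exact/borel/dopen_dball.
have fB := dball_fin_num x r r0.
have -> : c * ball_mass x r = fine (c%:E * mu (dball d x r)) by rewrite fineM.
apply: fine_le; rewrite ?wmass_fin_num ?fin_numM //.
rewrite -integral_cst //.
by apply: ge0_le_integral_sub => [y|y|y /Sc [By cy]]; rewrite ?lee_fin ?powR_ge0.
Qed.

Lemma ball_mass_le_wmassR S x r c : 0 < r -> 0 <= c ->
  (forall y, dball d x r y -> S y /\ c <= (1 + d a y) `^ (- q)) ->
  c * ball_mass x r <= wmassR S.
Proof.
move=> r0 c0 cS; have mB : measurable (dball d x r) by exact/borel/dopen_dball.
have fB := dball_fin_num x r r0.
have -> : c * ball_mass x r = fine (c%:E * mu (dball d x r)) by rewrite fineM.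
apply: fine_le; rewrite ?wmass_fin_num ?fin_numM //.
rewrite -integral_cst //.
by apply: ge0_le_integral_sub => [y|y|y /cS [Sy cy]]; rewrite ?lee_fin ?powR_ge0.
Qed.

Lemma wmassRU A B : measurable A -> measurable B -> A `&` B = set0 ->
  wmassR (A `|` B) = wmassR A + wmassR B.
Proof.
move=> mA mB AB; rewrite /wmassR -fineD ?wmass_fin_num //; congr fine.
apply: ge0_integral_setU => //.
- exact: measurable_funS measurableT (@subsetT _ _) measurable_weight.
- by move=> x _; rewrite lee_fin powR_ge0.
- by rewrite disj_set2E AB.
Qed.

Lemma doubling_hat_wmassR : doubling_hat d a mu q ->
  exists2 C, 0 < C & forall x r, 0 < r ->
    wmassR [set y | dhat d a x (Some y) < 2 * r] <=
    C * wmassR [set y | dhat d a x (Some y) < r].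
Proof.
move=> [C dbl]; exists C.
  have [pos2 [le2 _]] := dbl None 1 ltr01.
  case: (ltP 0 C) => // C_le0.
  have : (C%:E * wmass [set y | (dhat d a None (Some y) < 1)%R] <= 0)%E.
    by apply: mule_le0_ge0; [rewrite lee_fin | exact: wmass_ge0].
  by move=> /(le_trans le2) /(lt_le_trans pos2); rewrite ltxx.
move=> x r r0; have [_ [le2 _]] := dbl x r r0.
have fC : C%:E \is a fin_num by [].
have := fine_le (wmass_fin_num _) (fin_numM fC (wmass_fin_num _)) le2.
by rewrite fineM ?wmass_fin_num.
Qed.

Lemma tail_mass_ge0 t : 0 <= tail_mass t.
Proof. exact: wmassR_ge0. Qed.

Lemma le_tail_mass u v : u <= v -> tail_mass v <= tail_mass u.
Proof. by move=> uv; apply: le_wmassR => y /=; lra. Qed.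

Lemma le_ball_mass x y r s : 0 < r -> 0 < s -> dball d x r `<=` dball d y s ->
  ball_mass x r <= ball_mass y s.
Proof.
move=> r0 s0 sub; apply: fine_le.
- exact: dball_fin_num.
- exact: dball_fin_num.
- by apply: le_measure => //; rewrite inE; exact/borel/dopen_dball.
Qed.

Lemma tail_mass_split {t s : R} : t < s -> tail_mass t =
  wmassR ([set y | t < d a y] `&` dball d a s) + wmassR (~` dball d a s).
Proof.
move=> ts; have mB : measurable (dball d a s) by exact/borel/dopen_dball.
have mT : measurable [set y | t < d a y] by exact/borel/dopen_dist_gt.
rewrite -wmassRU; [|exact: measurableI|exact: measurableC|].
  congr wmassR; apply/seteqP; split => y /=.
    move=> ty; have [ys|sy] := ltP (d a y) s; first by left.
    by right; apply/negP; rewrite -leNgt.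
  by case=> [[]//|/negP]; rewrite /dball /= -leNgt => ?; lra.
by apply/seteqP; split => y // [[_ ?] ?].
Qed.

Hypothesis q_gt0 : 0 < q.
Variable C : R.
Hypothesis C_gt0 : 0 < C.
Hypothesis hat_doubling : forall x r, 0 < r ->
  wmassR [set y | dhat d a x (Some y) < 2 * r] <=
  C * wmassR [set y | dhat d a x (Some y) < r].

(* Doubling of \hat\mu_q, applied twice around z, compares the mass beyond z
   with that of a quarter-size \hat d-ball, which lies in an annulus. *)
Lemma wmassR_far_le {z : X} {t : R} : 1 <= t -> 2 * t <= d a z ->
  wmassR [set y | d a z < d a y] <=
  C * C * wmassR ([set y | t < d a y] `&` dball d a (2 * d a z + 1)).
Proof.
move=> t1 tz; have C0 := C_gt0; set rho := (1 + d a z)^-1 / 2.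
have rho0 : 0 < rho by rewrite divr_gt0 // invr_gt0 (one_plus_dist_gt0 d a dm).
apply: (@le_trans _ _ (wmassR [set y | dhat d a (Some z) (Some y) < 2 * (2 * rho)])).
  have -> : 2 * (2 * rho) = 2 / (1 + d a z).
    by rewrite /rho; field; rewrite gt_eqF ?(one_plus_dist_gt0 d a dm).
  by apply: le_wmassR => y /= /(dhat_lt_of_dist_lt d a dm).
have rho2 : 0 < 2 * rho by lra.
apply: le_trans (hat_doubling (Some z) _ rho2) _.
rewrite -mulrA ler_pM2l //; apply: le_trans (hat_doubling (Some z) _ rho0) _.
rewrite ler_pM2l //; apply: le_wmassR => y /= near.
by have /andP[ty yz] := dhat_near_in_annulus d a dm _ _ _ t1 tz near.
Qed.

Lemma tail_mass_decay_at {z : X} {t : R} : 1 <= t -> 2 * t <= d a z ->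
  (1 + C * C) * tail_mass (2 * d a z + 1) <= C * C * tail_mass t.
Proof.
move=> t1 tz; set s := 2 * d a z + 1; have ts : t < s by rewrite /s; lra.
have far := wmassR_far_le t1 tz.
have near_far : tail_mass s <= wmassR [set y | d a z < d a y].
  by apply: le_wmassR => y /=; rewrite /s; have := dm.1 a z; lra.
have out_far : tail_mass s <= wmassR (~` dball d a s).
  by apply: le_wmassR => y /= sy; apply/negP; rewrite -leNgt; lra.
have CC : 0 <= C * C by rewrite mulr_ge0 // ltW.
rewrite (tail_mass_split ts) mulrDr mulrDl mul1r.
by apply: lerD; [exact: le_trans near_far far | exact: ler_wpM2l].
Qed.

Lemma tail_mass_le_at {z : X} {t : R} : 1 <= t -> 2 * t <= d a z ->
  tail_mass t <= (1 + C * C) * (1 + t) `^ (- q) * ball_mass a (2 * d a z + 1).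
Proof.
move=> t1 tz; set s := 2 * d a z + 1; have ts : t < s by rewrite /s; lra.
have near : wmassR ([set y | t < d a y] `&` dball d a s) <=
            (1 + t) `^ (- q) * ball_mass a s.
  apply: wmassR_le_ball_mass; [lra | exact: powR_ge0 |] => y [/= ty By].
  by split => //; apply: ler_powRN; have := q_gt0; lra.
have out : wmassR (~` dball d a s) <= C * C * wmassR ([set y | t < d a y] `&` dball d a s).
  apply: le_trans (wmassR_far_le t1 tz); apply: le_wmassR => y /= /negP.
  by rewrite -leNgt /s; have := dm.1 a z; lra.
rewrite (tail_mass_split ts) -mulrA mulrDl mul1r; apply: lerD => //.
by apply: le_trans out _; rewrite ler_wpM2l ?mulr_ge0 // ltW.
Qed.

Variable D : R.
Hypothesis D_gt0 : 0 < D.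
Hypothesis ball_doubling : forall x r, 0 < r -> ball_mass x (2 * r) <= D * ball_mass x r.

Lemma ball_mass_iter x r n : 0 < r -> ball_mass x (2 ^+ n * r) <= D ^+ n * ball_mass x r.
Proof.
move=> r0; elim: n => [|n IH]; first by rewrite !expr0 !mul1r.
have nr0 : 0 < 2 ^+ n * r by rewrite mulr_gt0 // exprn_gt0.
rewrite !exprS -!mulrA; apply: le_trans (ball_doubling x _ nr0) _.
by rewrite ler_pM2l.
Qed.

Variable kappa : R.
Hypothesis perfect : unif_perfect_at d a kappa.

Lemma unif_perfect_point {t : R} : 1 <= t ->
  exists z, 2 * t <= d a z /\ d a z < kappa * (2 * t).
Proof.
move=> t1; have [z [zk /negP]] := perfect.2 (2 * t) ltac:(lra).
by rewrite /dball /= -leNgt => tz; exists z.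
Qed.

Lemma tail_mass_decay t : 1 <= t ->
  (1 + C * C) * tail_mass ((4 * kappa + 1) * t) <= C * C * tail_mass t.
Proof.
move=> t1; have [z [tz zk]] := unif_perfect_point t1.
have C0 : 0 <= C by exact: ltW.
apply: le_trans (tail_mass_decay_at t1 tz); rewrite ler_wpM2l ?addr_ge0 ?mulr_ge0 //.
by apply: le_tail_mass; nra.
Qed.

Lemma tail_mass_le_ball_mass : exists2 c, 0 < c &
  forall t, 1 <= t -> tail_mass t <= c * t `^ (- q) * ball_mass a t.
Proof.
have [n kn] := @exists_expr_ge R 2 (4 * kappa + 1) ltac:(lra).
have C0 : 0 <= C by exact: ltW.
exists ((1 + C * C) * D ^+ n); first by rewrite mulr_gt0 ?exprn_gt0 // ltr_pwDl ?mulr_ge0.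
move=> t t1; have [z [tz zk]] := unif_perfect_point t1; have t0 : 0 < t by lra.
apply: le_trans (tail_mass_le_at t1 tz) _.
have m_le : ball_mass a (2 * d a z + 1) <= D ^+ n * ball_mass a t.
  apply: le_trans (ball_mass_iter a t n t0); apply: le_ball_mass.
  - by have := dm.1 a z; lra.
  - by rewrite mulr_gt0 // exprn_gt0.
  by move=> y; rewrite /dball /= => yz; nra.
have w_le : (1 + t) `^ (- q) <= t `^ (- q) by apply: ler_powRN; have := q_gt0; lra.
rewrite -!mulrA ler_wpM2l ?addr_ge0 ?mulr_ge0 // mulrCA.
apply: ler_pM => //; first exact: powR_ge0.
by apply/ltW/ball_mass_gt0; have := dm.1 a z; lra.
Qed.

(* The ball B(z, t) with 2t <= |z| < 2 kappa t lies in the tail beyond t, has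
   weight >= ((2 kappa + 2) t)^-q there, and by doubling of mu its mass is
   comparable to that of B(a, t). *)
Lemma ball_mass_le_tail_mass : exists2 c, 0 < c &
  forall t, 1 <= t -> c * t `^ (- q) * ball_mass a t <= tail_mass t.
Proof.
have k1 := perfect.1; have [n kn] := @exists_expr_ge R 2 (2 * kappa + 1) ltac:(lra).
have [_ [_ [dC dtr]]] := dm.
set A := (2 * kappa + 2) `^ (- q); have A0 : 0 < A by rewrite powR_gt0 //; lra.
have Dn : 0 < D ^+ n by rewrite exprn_gt0.
exists (A / D ^+ n); first by rewrite divr_gt0.
move=> t t1; have [z [tz zk]] := unif_perfect_point t1; have t0 : 0 < t by lra.
have m_le : ball_mass a t <= D ^+ n * ball_mass z t.
  apply: le_trans (ball_mass_iter z t n t0); apply: le_ball_mass => //.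
    by rewrite mulr_gt0.
  by move=> y; rewrite /dball /= => ay; have := dtr z a y; rewrite (dC z a); nra.
have w_le : A * t `^ (- q) * ball_mass z t <= tail_mass t.
  rewrite /A -powRM; [|lra|lra]; apply: ball_mass_le_wmassR => // [|y].
    exact: powR_ge0.
  rewrite /dball /= => zy; have := dtr a y z; have := dtr a z y; rewrite (dC y z).
  move=> ayz azy; split; first lra.
  by apply: ler_powRN; [exact: one_plus_dist_gt0 | nra | exact: ltW].
apply: le_trans w_le; apply: le_trans (ler_wpM2l _ m_le) _.
  by rewrite mulr_ge0 ?divr_ge0 ?powR_ge0 // ltW.
have -> : A / D ^+ n * t `^ (- q) * (D ^+ n * ball_mass z t) =
          A * t `^ (- q) * ball_mass z t by field; rewrite gt_eqF.
by [].
Qed.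

(* Any beta with (4 kappa + 1)^beta <= 1 + C^-2 works; beta <= q/2 keeps
   s = q - beta in (0, q). *)
Lemma tail_mass_power_decay : exists2 beta, 0 < beta < q &
  exists2 K, 0 < K & forall r R', 1 <= r -> r <= R' ->
    tail_mass R' <= K * ((r / R') `^ beta * tail_mass r).
Proof.
have k1 := perfect.1; have C0 := C_gt0; have CC : 0 < C * C by rewrite mulr_gt0.
set L := 4 * kappa + 1; have L1 : 1 < L by rewrite /L; lra.
have y1 : 1 < (1 + C * C) / (C * C) by rewrite ltr_pdivlMr // mul1r; lra.
have q2 : 0 < q / 2 by have := q_gt0; lra.
have [beta /andP[b0 bq] Lb] := exists_powR_le _ _ _ L1 y1 q2.
exists beta; first by apply/andP; split => //; have := q_gt0; lra.
exists (L `^ beta); first by rewrite powR_gt0 //; lra.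
have decay t : 1 <= t -> L `^ beta * tail_mass (L * t) <= tail_mass t.
  move=> t1; rewrite -(ler_pM2l CC) mulrCA.
  have := tail_mass_decay t t1; rewrite -/L => dec.
  apply: le_trans _ dec; rewrite mulrA.
  by apply: ler_wpM2r; [exact: tail_mass_ge0 | rewrite -ler_pdivlMr].
move=> r R' r1 rR; apply: (geometric_decay _ _ _ L1 (ltW b0) _ _ decay r R' r1 rR).
  by move=> u _; exact: tail_mass_ge0.
by move=> u v _; exact: le_tail_mass.
Qed.

Lemma ball_mass_ratio_ge : exists s, 0 < s /\ s < q /\
  exists Cs, 0 < Cs /\ forall r R', 1 <= r -> r <= R' ->
    Cs * (r / R') `^ s <= ball_mass a r / ball_mass a R'.
Proof.
have [beta /andP[b0 bq] [K K0 decay]] := tail_mass_power_decay.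
have [c1 c10 lower] := ball_mass_le_tail_mass.
have [c2 c20 upper] := tail_mass_le_ball_mass.
exists (q - beta); split; first lra; split; first lra.
exists (c1 / (c2 * K)); split; first by rewrite divr_gt0 ?mulr_gt0.
move=> r R' r1 rR; have r0 : 0 < r by lra.
have R0 : 0 < R' by lra.
apply: ratio_ge_of_powR_bounds => //; first exact: ball_mass_gt0.
apply: le_trans (lower _ (le_trans r1 rR)) _; apply: le_trans (decay _ _ r1 rR) _.
rewrite ler_pM2l // ler_wpM2l ?powR_ge0 //; exact: upper.
Qed.

End TailMass.

Theorem theorem4p5 (R : realType) (dsp : measure_display) (X : measurableType dsp)
  (d : X -> X -> R) (mu : {measure set X -> \bar R}) (a : X) (kappa q : R) :
  is_metric d ->
  (forall A : set X, dopen d A -> measurable A) ->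
  (forall N : set X, measurable N -> mu N = 0%E ->
     forall A : set X, A `<=` N -> measurable A) ->
  (forall (x : X) (r : R), 0 < r ->
     (0 < mu (dball d x r))%E /\ (mu (dball d x r) < +oo)%E) ->
  unbounded_at d a ->
  unif_perfect_at d a kappa ->
  doubling d mu ->
  0 < q ->
  doubling_hat d a mu q ->
  exists s : R, 0 < s /\ s < q /\
    exists Cs : R, 0 < Cs /\
      forall r R' : R, 1 <= r -> r <= R' ->
        Cs * (r / R') `^ s <=
          fine (mu (dball d a r)) / fine (mu (dball d a R')).
Proof.
move=> dm borel _ balls_pos _ perfect dbl q_gt0 dblhat.
have wmass_fin := doubling_hat_fin _ _ _ _ dblhat.
have [D D_gt0 hD] := doubling_ball_mass _ _ balls_pos dbl.
have [C C_gt0 hC] := doubling_hat_wmassR _ _ _ _ dm wmass_fin dblhat.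
exact: (ball_mass_ratio_ge _ _ _ _ balls_pos dm borel wmass_fin q_gt0 _ C_gt0 hC
  _ D_gt0 hD _ perfect).
Qed.
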